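(* Let $\theta$ be an ordered partial action of an inverse semigroupoid $\mathcal{S}$ on a partially ordered set $X$, and let $(\eta,E,i)$ be the ordered globalization given by the globalization construction with the induced order on $E$. Then for every ordered global action $\zeta=(\{F_s\},\{\zeta_s\})$ of $\mathcal{S}$ on a poset $F$ and every ordered $\mathcal{S}$-equivariant map $j:X\to F$, there exists a unique ordered $\mathcal{S}$-equivariant map $k:E\to F$ with $k\circ i=j$; it is given by $k([s,x])=\zeta_s(j(x))$.
   Context: Inverse semigroupoid: arrows $\mathcal{S}$, objects $\mathcal{S}^{(0)}$, maps $d,c$, associative multiplication on $\mathcal{S}^{(2)}=\{(s,t):d(s)=c(t)\}$ with $d(st)=d(t)$, $c(st)=c(s)$, and unique $s^*$ with $ss^*s=s$, $s^*ss^*=s^*$; $E(\mathcal{S})$ = idempotents; natural partial order $s\leqslant t$ (for parallel $s,t$) iff $s=te$ for an idempotent $e$ with $(t,e)\in\mathcal{S}^{(2)}$. A partial action of $\mathcal{S}$ on a set $X$ is a pair $(\{X_s\},\{\theta_s\})$ of subsets $X_s\subseteq X$ and maps $\theta_s:X_{s^*}\to X_s$ such that: each $\theta_s$ is a bijection with $\theta_s^{-1}=\theta_{s^*}$ and $X=\bigcup_s X_s$; $\theta_s\circ\theta_t\subseteq\theta_{st}$ as partial maps for $(s,t)\in\mathcal{S}^{(2)}$; $X_s\subseteq X_t$ whenever $s\leqslant t$. It is global if $\theta_s\circ\theta_t=\theta_{st}$ for all $(s,t)\in\mathcal{S}^{(2)}$. When $X$ is a poset, it is an ordered partial action if each $X_s$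 is an order ideal of $X$ and each $\theta_s$ is an order isomorphism. A map $\varphi:X\to Y$ between sets with partial actions $\theta^X,\theta^Y$ is $\mathcal{S}$-equivariant if $\varphi(X_s)\subseteq Y_s$ and $\varphi(\theta^X_s(x))=\theta^Y_s(\varphi(x))$ for $x\in X_{s^*}$; it is ordered $\mathcal{S}$-equivariant if moreover order preserving. Globalization construction: let $D=\{(s,x)\in\mathcal{S}\times X: x\in X_{s^*s}\}$. Define $(s,x)\sim(t,y)$ on $D$ iff either (R1) $(t^*,s)\in\mathcal{S}^{(2)}$, $x\in X_{s^*t}$ and $\theta_{t^*s}(x)=y$; or (R2) $s,t\in E(\mathcal{S})$ and $x=y$. Let $\approx$ be the equivalence relation on $D$ generated by $\sim$, $E=D/{\approx}$, and $[s,x]$ the class of $(s,x)$. For $s\in\mathcal{S}$ put $D_s=\{(p,x)\in D:(s^*,p)\in\mathcal{S}^{(2)},\ x\in X_{p^*ss^*p}\}$, $E_s=\{[p,x]:(p,x)\in D_s\}$, and $\eta_s:E_{s^*}\to E_s$, $\eta_s([p,x])=[sp,x]$ for $(p,x)\in D_{s^*}$. Define $i:X\to E$ by $i(x)=[e,x]$ for any $e\in E(\mathcal{S})$ with $x\in X_e$. The order on $E$: $[s,x]\leqslant[t,y]$ iff there exist $(r,y')\in D$ and $x'\in X$ with $(r,y')\approx(t,y)$, $x'\leqslant y'$, $(r,x')\approx(s,x)$; with it $\eta$ is an ordered global action. *)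

From Stdlib Require Import Relations ClassicalEpsilon.

Set Implicit Arguments.

(* Inverse semigroupoids.  The multiplication is a total function on   *)
(* arrows, but all axioms only constrain it on composable pairs        *)
(* (s,t) with d(s) = c(t); its values elsewhere are irrelevant.        *)
Record InvSemigroupoid := {
  arr : Type;
  obj : Type;
  dm : arr -> obj;
  cd : arr -> obj;
  mul : arr -> arr -> arr;
  star : arr -> arr;
  dm_mul : forall s t, dm s = cd t -> dm (mul s t) = dm t;
  cd_mul : forall s t, dm s = cd t -> cd (mul s t) = cd s;
  mul_assoc : forall s t u, dm s = cd t -> dm t = cd u ->
      mul (mul s t) u = mul s (mul t u);
  star_dm : forall s, dm s = cd (star s);
  star_cd : forall s, dm (star s) = cd s;
  star_l : forall s, mul (mul s (star s)) s = s;
  star_r : forall s, mul (mul (star s) s) (star s) = star s;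
  star_uniq : forall s t, dm s = cd t -> dm t = cd s ->
      mul (mul s t) s = s -> mul (mul t s) t = t -> t = star s
}.

Arguments dm {_} _.
Arguments cd {_} _.
Arguments mul {_} _ _.
Arguments star {_} _.

Definition idempotent (S : InvSemigroupoid) (e : arr S) : Prop :=
  dm e = cd e /\ mul e e = e.

Definition nat_le (S : InvSemigroupoid) (s t : arr S) : Prop :=
  dm s = dm t /\ cd s = cd t /\
  exists e, idempotent S e /\ dm t = cd e /\ s = mul t e.

(* Partial actions: domains Xs s = X_s and maps th s = theta_s, the    *)
(* latter total functions that only matter on X_{s*}.                  *)
Definition partial_action {S : InvSemigroupoid} {X : Type}
    (Xs : arr S -> X -> Prop) (th : arr S -> X -> X) : Prop :=
  (forall s x, Xs (star s) x -> Xs s (th s x) /\ th (star s) (th s x) = x) /\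
  (forall s y, Xs s y -> Xs (star s) (th (star s) y) /\ th s (th (star s) y) = y) /\
  (forall x, exists s, Xs s x) /\
  (forall s t, dm s = cd t -> forall x, Xs (star t) x -> Xs (star s) (th t x) ->
      Xs (star (mul s t)) x /\ th (mul s t) x = th s (th t x)) /\
  (forall s t, nat_le S s t -> forall x, Xs s x -> Xs t x).

Definition global_action {S : InvSemigroupoid} {X : Type}
    (Xs : arr S -> X -> Prop) (th : arr S -> X -> X) : Prop :=
  partial_action Xs th /\
  (forall s t, dm s = cd t -> forall x,
      (Xs (star (mul s t)) x <-> (Xs (star t) x /\ Xs (star s) (th t x))) /\
      (Xs (star (mul s t)) x -> th (mul s t) x = th s (th t x))).

Definition is_poset {X : Type} (le : X -> X -> Prop) : Prop :=
  (forall x, le x x) /\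
  (forall x y, le x y -> le y x -> x = y) /\
  (forall x y z, le x y -> le y z -> le x z).

Definition order_ideal {X : Type} (le : X -> X -> Prop) (A : X -> Prop) : Prop :=
  forall x y, le x y -> A y -> A x.

Definition ordered_partial_action {S : InvSemigroupoid} {X : Type}
    (le : X -> X -> Prop) (Xs : arr S -> X -> Prop) (th : arr S -> X -> X) : Prop :=
  partial_action Xs th /\
  (forall s, order_ideal le (Xs s)) /\
  (forall s x y, Xs (star s) x -> Xs (star s) y -> (le x y <-> le (th s x) (th s y))).

Definition ordered_global_action {S : InvSemigroupoid} {X : Type}
    (le : X -> X -> Prop) (Xs : arr S -> X -> Prop) (th : arr S -> X -> X) : Prop :=
  ordered_partial_action le Xs th /\ global_action Xs th.

Definition equivariant {S : InvSemigroupoid} {X Y : Type}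
    (Xs : arr S -> X -> Prop) (th : arr S -> X -> X)
    (Ys : arr S -> Y -> Prop) (ze : arr S -> Y -> Y) (phi : X -> Y) : Prop :=
  (forall s x, Xs s x -> Ys s (phi x)) /\
  (forall s x, Xs (star s) x -> phi (th s x) = ze s (phi x)).

Definition ordered_equivariant {S : InvSemigroupoid} {X Y : Type}
    (leX : X -> X -> Prop) (Xs : arr S -> X -> Prop) (th : arr S -> X -> X)
    (leY : Y -> Y -> Prop) (Ys : arr S -> Y -> Prop) (ze : arr S -> Y -> Y)
    (phi : X -> Y) : Prop :=
  equivariant Xs th Ys ze phi /\ (forall x y, leX x y -> leY (phi x) (phi y)).

Section Glob.
Context {S : InvSemigroupoid} {X : Type}
          (Xs : arr S -> X -> Prop) (th : arr S -> X -> X).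

Definition Dg (a : arr S * X) : Prop :=
  let (s, x) := a in Xs (mul (star s) s) x.

Definition simg (a b : arr S * X) : Prop :=
  let (s, x) := a in let (t, y) := b in
  (dm (star t) = cd s /\ Xs (mul (star s) t) x /\ th (mul (star t) s) x = y) \/
  (idempotent S s /\ idempotent S t /\ x = y).

Definition simD (a b : arr S * X) : Prop := Dg a /\ Dg b /\ simg a b.

Definition approx (a b : arr S * X) : Prop :=
  Dg a /\ Dg b /\ clos_refl_sym_trans _ simD a b.

(* E = D / approx, realised as the type of equivalence classes *)
Definition Eg : Type := { P : arr S * X -> Prop | exists a, Dg a /\ P = approx a }.

Definition cls (a : arr S * X) (H : Dg a) : Eg :=
  exist _ (approx a) (ex_intro _ a (conj H eq_refl)).

Definition Dsg (s : arr S) (a : arr S * X) : Prop :=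
  let (p, x) := a in
  Dg a /\ dm (star s) = cd p /\ Xs (mul (mul (mul (star p) s) (star s)) p) x.

Definition Esg (s : arr S) (e : Eg) : Prop :=
  exists p x, proj1_sig e (p, x) /\ Dsg s (p, x).

(* eta_s([p,x]) = [sp,x] for (p,x) in D_{s*} (value outside E_{s*} irrelevant) *)
Definition etag (s : arr S) (e : Eg) : Eg :=
  epsilon (inhabits e) (fun e' => exists p x,
     Dsg (star s) (p, x) /\ proj1_sig e (p, x) /\ proj1_sig e' (mul s p, x)).

Definition leEg (le : X -> X -> Prop) (e1 e2 : Eg) : Prop :=
  exists r y' x', proj1_sig e2 (r, y') /\ le x' y' /\ proj1_sig e1 (r, x').

Lemma star_star_g (s : arr S) : star (star s) = s.
Proof.
  symmetry. apply star_uniq.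
  - apply star_cd.
  - apply star_dm.
  - apply star_r.
  - apply star_l.
Qed.

Lemma i_exists (H : partial_action Xs th) (x : X) :
  exists e : arr S, idempotent S e /\ Xs e x /\ Dg (e, x).
Proof.
  destruct H as [Hb [_ [Hcov [Hc _]]]].
  destruct (Hcov x) as [s Hs].
  set (e := mul s (star s)).
  assert (Hdc : dm s = cd (star s)) by apply star_dm.
  assert (Hde : dm e = cd e).
  { unfold e. rewrite dm_mul by exact Hdc. rewrite cd_mul by exact Hdc.
    apply star_cd. }
  assert (Hee : mul e e = e).
  { unfold e. rewrite <- mul_assoc.
    - rewrite star_l. reflexivity.
    - rewrite dm_mul by exact Hdc. apply star_cd.
    - exact Hdc. }
  assert (Hse : star e = e).
  { symmetry. apply star_uniq; try assumption; try (symmetry; assumption);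
    rewrite Hee; exact Hee. }
  assert (HXe : Xs e x).
  { rewrite <- Hse. unfold e.
    apply (Hc s (star s) Hdc x).
    - rewrite star_star_g. exact Hs.
    - destruct (Hb (star s) x) as [H1 _].
      + rewrite star_star_g. exact Hs.
      + exact H1. }
  exists e. split; [split; assumption|]. split; [exact HXe|].
  simpl. rewrite Hse, Hee. exact HXe.
Qed.

Definition ig (H : partial_action Xs th) (x : X) : Eg :=
  let w := constructive_indefinite_description _ (i_exists H x) in
  @cls (proj1_sig w, x) (proj2 (proj2 (proj2_sig w))).

End Glob.

Arguments Esg {S X} Xs th s e.
Arguments etag {S X} Xs th s e.
Arguments leEg {S X} Xs th le e1 e2.
Arguments ig {S X} Xs th H x.
Arguments cls {S X} Xs th a H.
Arguments Dsg {S X} Xs s a.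

From Stdlib Require Import Relations ClassicalEpsilon FunctionalExtensionality PropExtensionality ProofIrrelevance.

(* Every class of the globalization is [[s, x] = eta_s (i x)], so an equivariant [k] with
   [k \o i = j] must send it to [ze s (j x)]; this gives uniqueness and the formula.  For
   existence, [(s, x) |-> ze s (j x)] must be constant on classes.  On [D] the equivalence
   generated by [~] collapses to a single relation: either (R1), or [th s x = th t y].  Proving
   that this relation is transitive is where the inverse semigroupoid identities (idempotents
   commute, [(s t)^* = t^* s^*]) are used, and both alternatives are respected by [ze s (j x)]
   because [ze] is global. *)

Lemma dm_star (S : InvSemigroupoid) (s : arr S) : dm (star s) = cd s.
Proof. apply star_cd. Qed.

Lemma cd_star (S : InvSemigroupoid) (s : arr S) : cd (star s) = dm s.
Proof. symmetry; apply star_dm. Qed.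

(* Discharges the composability side conditions [dm _ = cd _] of products. *)
Ltac solve_obj :=
  rewrite ?dm_star, ?cd_star in *;
  repeat (progress (rewrite ?dm_star, ?cd_star, ?star_star_g;
    try (rewrite dm_mul by solve_obj); try (rewrite cd_mul by solve_obj)));
  congruence.

Ltac reassoc := repeat (rewrite mul_assoc by solve_obj).
Ltac reassoc_in H := repeat (rewrite mul_assoc in H by solve_obj).

Section InverseSemigroupoid.
Variable S : InvSemigroupoid.
Implicit Types s t w e f : arr S.

Lemma mul_star_mul s : mul s (mul (star s) s) = s.
Proof. rewrite <- mul_assoc by solve_obj. apply star_l. Qed.

Lemma star_mul_star s : mul (star s) (mul s (star s)) = star s.
Proof. rewrite <- mul_assoc by solve_obj. apply star_r. Qed.

Lemma mul_star_mulw s w : dm s = cd w -> mul s (mul (star s) (mul s w)) = mul s w.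
Proof.
  intros H. rewrite <- (mul_assoc _ (star s)), <- mul_assoc by solve_obj.
  now rewrite mul_star_mul.
Qed.

Lemma star_mul_starw s w : cd s = cd w -> mul (star s) (mul s (mul (star s) w)) = mul (star s) w.
Proof.
  intros H. rewrite <- (mul_assoc _ s), <- mul_assoc by solve_obj.
  now rewrite star_mul_star.
Qed.

Lemma star_idem e : idempotent S e -> star e = e.
Proof. intros [H1 H2]. symmetry. apply star_uniq; auto; rewrite !H2; auto. Qed.

Lemma idem_mulKw e w : idempotent S e -> dm e = cd w -> mul e (mul e w) = mul e w.
Proof. intros [H1 H2] H. rewrite <- mul_assoc by congruence. now rewrite H2. Qed.

Lemma idempotent_star_mul s : idempotent S (mul (star s) s).
Proof. split; [solve_obj|]. reassoc. now rewrite star_mul_starw by solve_obj. Qed.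

Lemma idempotent_mul_star s : idempotent S (mul s (star s)).
Proof. split; [solve_obj|]. reassoc. now rewrite mul_star_mulw by solve_obj. Qed.

(* With [g := (e f)^*], the element [f g e] is also an inverse of [e f], so [g = f g e];
   this makes [g] idempotent, hence so is [e f = g^*]. *)
Lemma idempotent_mul e f : idempotent S e -> idempotent S f -> dm e = cd f ->
  idempotent S (mul e f).
Proof.
  intros He Hf Hef. pose proof He as [He1 He2]. pose proof Hf as [Hf1 Hf2].
  assert (Hefg := mul_star_mul (mul e f)). assert (Hgefg := star_mul_star (mul e f)).
  assert (Hg1 : dm (star (mul e f)) = cd e) by solve_obj.
  assert (Hg2 : cd (star (mul e f)) = dm f) by solve_obj.
  remember (star (mul e f)) as g eqn:Hg.
  reassoc_in Hefg. reassoc_in Hgefg.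
  assert (Hgefe := f_equal (fun z => mul z e) Hgefg); simpl in Hgefe; reassoc_in Hgefe.
  assert (Hfge : mul f (mul g e) = g).
  { rewrite Hg at 2. apply star_uniq; [solve_obj | solve_obj | |].
    - reassoc. rewrite (idem_mulKw f), (idem_mulKw e) by (auto; solve_obj). exact Hefg.
    - reassoc. rewrite (idem_mulKw e), (idem_mulKw f) by (auto; solve_obj).
      now rewrite Hgefe. }
  assert (Hgi : idempotent S g).
  { split; [solve_obj|].
    transitivity (mul (mul f (mul g e)) (mul f (mul g e))); [now rewrite Hfge|].
    reassoc. now rewrite Hgefe. }
  rewrite <- (star_star_g (mul e f)), <- Hg, (star_idem _ Hgi). exact Hgi.
Qed.

Lemma idem_mulC e f : idempotent S e -> idempotent S f -> dm e = cd f ->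
  mul e f = mul f e.
Proof.
  intros He Hf Hef. pose proof He as [He1 He2]. pose proof Hf as [Hf1 Hf2].
  pose proof (idempotent_mul _ _ He Hf Hef) as [_ Hu].
  pose proof (idempotent_mul _ _ Hf He ltac:(congruence)) as [_ Hv].
  rewrite <- (star_idem _ (idempotent_mul _ _ He Hf Hef)). symmetry. apply star_uniq.
  - solve_obj.
  - solve_obj.
  - reassoc. rewrite (idem_mulKw f), (idem_mulKw e) by (auto; solve_obj).
    reassoc_in Hu. exact Hu.
  - reassoc. rewrite (idem_mulKw e), (idem_mulKw f) by (auto; solve_obj).
    reassoc_in Hv. exact Hv.
Qed.

Lemma idem_mulCA e f w : idempotent S e -> idempotent S f -> dm e = cd f -> dm f = cd w ->
  mul e (mul f w) = mul f (mul e w).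
Proof.
  intros He Hf H1 H2. pose proof He as [He1 _]. pose proof Hf as [Hf1 _].
  rewrite <- !mul_assoc by congruence. now rewrite (idem_mulC _ _ He Hf H1).
Qed.

Lemma star_mul s t : dm s = cd t -> star (mul s t) = mul (star t) (star s).
Proof.
  intros H. symmetry. apply star_uniq; [solve_obj | solve_obj | |].
  - reassoc.
    pose proof (idem_mulCA _ _ t (idempotent_mul_star t) (idempotent_star_mul s)
                  ltac:(solve_obj) ltac:(solve_obj)) as Hc.
    reassoc_in Hc. now rewrite Hc, mul_star_mulw, mul_star_mul by solve_obj.
  - reassoc.
    pose proof (idem_mulCA _ _ (star s) (idempotent_star_mul s) (idempotent_mul_star t)
                  ltac:(solve_obj) ltac:(solve_obj)) as Hc.
    reassoc_in Hc. now rewrite Hc, star_mul_starw, star_mul_star by solve_obj.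
Qed.

Lemma idem_mul_starCA e c w : idempotent S e -> dm e = cd c -> cd c = cd w ->
  mul e (mul c (mul (star c) w)) = mul c (mul (star c) (mul e w)).
Proof.
  intros He H1 H2. pose proof He as [He1 _].
  pose proof (idem_mulCA _ _ w He (idempotent_mul_star c) ltac:(solve_obj) ltac:(solve_obj)) as Hc.
  reassoc_in Hc. exact Hc.
Qed.

Lemma mul_starCA b c w : cd b = cd c -> cd c = cd w ->
  mul b (mul (star b) (mul c (mul (star c) w))) = mul c (mul (star c) (mul b (mul (star b) w))).
Proof.
  intros H1 H2.
  pose proof (idem_mul_starCA _ c w (idempotent_mul_star b) ltac:(solve_obj) ltac:(solve_obj)) as Hc.
  reassoc_in Hc. exact Hc.
Qed.

Lemma idempotent_conj e c : idempotent S e -> dm e = cd c ->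
  idempotent S (mul (star c) (mul e c)).
Proof.
  intros He H. pose proof He as [He1 _]. split; [solve_obj|].
  reassoc. rewrite idem_mul_starCA, idem_mulKw, star_mul_starw by (auto; solve_obj).
  reflexivity.
Qed.

End InverseSemigroupoid.

Section PartialAction.
Context {S : InvSemigroupoid} {X : Type} {Xs : arr S -> X -> Prop} {th : arr S -> X -> X}
  (Hp : partial_action Xs th).
Implicit Types s t p e : arr S.

Lemma th_dom s x : Xs (star s) x -> Xs s (th s x) /\ th (star s) (th s x) = x.
Proof. apply Hp. Qed.

Lemma th_mul s t x : dm s = cd t -> Xs (star t) x -> Xs (star s) (th t x) ->
  Xs (star (mul s t)) x /\ th (mul s t) x = th s (th t x).
Proof. intros; apply Hp; auto. Qed.

Lemma Xs_nat_le s t x : nat_le S s t -> Xs s x -> Xs t x.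
Proof. intros; eapply Hp; eauto. Qed.

Lemma th_idem e x : idempotent S e -> Xs e x -> th e x = x.
Proof.
  intros He Hx. pose proof (star_idem _ _ He) as Hse.
  assert (Hx' : Xs (star e) x) by now rewrite Hse.
  destruct (th_dom e x Hx') as [H1 H2].
  assert (H1' : Xs (star e) (th e x)) by now rewrite Hse.
  destruct (th_mul e e x (proj1 He) Hx' H1') as [_ H3].
  destruct (th_dom e _ H1') as [_ H4].
  rewrite (proj2 He) in H3. rewrite <- H3, H2 in H4. now symmetry.
Qed.

Lemma Xs_mul_star s x : Xs s x -> Xs (mul s (star s)) x.
Proof.
  intros Hx. rewrite <- (star_star_g s) in Hx.
  destruct (th_dom _ x Hx) as [H1 _].
  destruct (th_mul s (star s) x ltac:(solve_obj) Hx H1) as [H _].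
  now rewrite star_mul, star_star_g in H by solve_obj.
Qed.

Lemma th_mul_idem s e x : idempotent S e -> dm s = cd e -> Xs e x -> Xs (star s) x ->
  th (mul s e) x = th s x.
Proof.
  intros He Hse Hx Hx'. rewrite <- (th_idem e x He Hx) at 2.
  apply th_mul; auto.
  - now rewrite (star_idem _ _ He).
  - now rewrite (th_idem e x He Hx).
Qed.

(* Condition (R1) of the globalization, without the requirement of lying in [D]. *)
Definition sim1 s x t y : Prop :=
  dm (star t) = cd s /\ Xs (mul (star s) t) x /\ th (mul (star t) s) x = y.

Definition same_image s x t y : Prop :=
  Xs (star s) x /\ Xs (star t) y /\ th s x = th t y.

Definition linked (a b : arr S * X) : Prop :=
  sim1 (fst a) (snd a) (fst b) (snd b) \/ same_image (fst a) (snd a) (fst b) (snd b).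

Lemma sim1_sym s x t y : sim1 s x t y -> sim1 t y s x.
Proof.
  intros [H1 [H2 H3]].
  assert (E : mul (star s) t = star (mul (star t) s))
    by now rewrite star_mul, star_star_g by solve_obj.
  rewrite E in H2. destruct (th_dom _ _ H2) as [_ H4]. subst y.
  split; [solve_obj|]. split; [exact (proj1 (th_dom _ _ H2))|].
  now rewrite <- E in H4.
Qed.

Lemma sim1_same_image c z b y : sim1 c z b y -> Xs (star b) y -> same_image c z b y.
Proof.
  intros [H1 [H2 H3]] Hy.
  assert (Hz : Xs (star (mul (star b) c)) z) by (rewrite star_mul, star_star_g by solve_obj; auto).
  assert (Hy' : Xs (star b) (th (mul (star b) c) z)) by now rewrite H3.
  destruct (th_mul b (mul (star b) c) z ltac:(solve_obj) Hz Hy') as [HA HB].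
  rewrite !star_mul, star_star_g in HA by solve_obj. reassoc_in HA.
  (* [c^* b b^* <= c^*], and [z] lies in the domain of the former *)
  assert (Hzc : Xs (star c) z).
  { apply (Xs_nat_le (mul (star c) (mul b (star b)))); auto.
    split; [solve_obj|]. split; [solve_obj|]. exists (mul b (star b)).
    split; [apply idempotent_mul_star|]. split; [solve_obj | reflexivity]. }
  split; [exact Hzc|]. split; [exact Hy|].
  assert (HzE : Xs (mul (star c) (mul (mul b (star b)) c)) z).
  { pose proof (Xs_mul_star _ _ H2) as H. rewrite star_mul, star_star_g in H by solve_obj.
    reassoc_in H. reassoc. exact H. }
  rewrite <- (th_mul_idem c _ z (idempotent_conj _ _ c (idempotent_mul_star _ b) ltac:(solve_obj))
                ltac:(solve_obj) HzE Hzc).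
  rewrite <- H3, <- HB. f_equal. reassoc. now rewrite mul_starCA, mul_star_mul by solve_obj.
Qed.

Lemma sim1_trans a x b y c z : sim1 a x b y -> sim1 b y c z -> sim1 a x c z.
Proof.
  intros [H1 [H2 H3]] [H4 [H5 H6]].
  assert (Hx : Xs (star (mul (star b) a)) x) by (rewrite star_mul, star_star_g by solve_obj; auto).
  assert (Hy : Xs (star (mul (star c) b)) (th (mul (star b) a) x))
    by (rewrite H3, star_mul, star_star_g by solve_obj; auto).
  destruct (th_mul (mul (star c) b) (mul (star b) a) x ltac:(solve_obj) Hx Hy) as [HA HB].
  rewrite !star_mul, !star_star_g in HA by solve_obj. reassoc_in HA.
  assert (Hxac : Xs (mul (star a) c) x).
  { apply (Xs_nat_le (mul (star a) (mul b (mul (star b) c)))); auto.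
    split; [solve_obj|]. split; [solve_obj|]. exists (mul (star c) (mul (mul b (star b)) c)).
    split; [apply idempotent_conj; [apply idempotent_mul_star | solve_obj]|]. split; [solve_obj|].
    reassoc. now rewrite mul_starCA, mul_star_mul by solve_obj. }
  split; [solve_obj|]. split; [exact Hxac|].
  assert (HxE : Xs (mul (star a) (mul (mul b (star b)) a)) x).
  { pose proof (Xs_mul_star _ _ H2) as H. rewrite star_mul, star_star_g in H by solve_obj.
    reassoc_in H. reassoc. exact H. }
  assert (Hxs : Xs (star (mul (star c) a)) x) by (rewrite star_mul, star_star_g by solve_obj; auto).
  rewrite <- (th_mul_idem (mul (star c) a) _ x
                (idempotent_conj _ _ a (idempotent_mul_star _ b) ltac:(solve_obj))
                ltac:(solve_obj) HxE Hxs).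
  rewrite <- H6, <- H3, <- HB. f_equal. reassoc. now rewrite mul_starCA, mul_star_mul by solve_obj.
Qed.

Lemma linked_sym a b : linked a b -> linked b a.
Proof.
  intros [H|[H1 [H2 H3]]]; [left; now apply sim1_sym | right; split; auto].
Qed.

Lemma linked_trans a b c : linked a b -> linked b c -> linked a c.
Proof.
  destruct a as [s x], b as [t y], c as [u z]; unfold linked; simpl.
  intros [H|[H1 [H2 H3]]] [H'|[H1' [H2' H3']]].
  - left. eapply sim1_trans; eauto.
  - right. destruct (sim1_same_image _ _ _ _ H H1') as [? [? ?]]. repeat split; congruence.
  - right. destruct (sim1_same_image _ _ _ _ (sim1_sym _ _ _ _ H') H2) as [? [? ?]].
    repeat split; congruence.
  - right. repeat split; congruence.
Qed.

Lemma linked_same_image s x t y : linked (s, x) (t, y) -> Xs (star t) y -> same_image s x t y.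
Proof. intros [H|H] Hy; [exact (sim1_same_image _ _ _ _ H Hy) | exact H]. Qed.

Lemma simD_linked a b : simD Xs th a b -> linked a b.
Proof.
  destruct a as [s x], b as [t y]. intros [Ha [Hb [H|[Hs [Ht Hxy]]]]]; [now left|].
  subst y. right. unfold same_image; simpl in Ha, Hb |- *.
  rewrite (star_idem _ _ Hs), (proj2 Hs) in Ha. rewrite (star_idem _ _ Ht), (proj2 Ht) in Hb.
  rewrite (star_idem _ _ Hs), (star_idem _ _ Ht).
  repeat split; auto. now rewrite (th_idem s x Hs Ha), (th_idem t x Ht Hb).
Qed.

Lemma approx_linked a b : clos_refl_sym_trans _ (simD Xs th) a b -> a = b \/ linked a b.
Proof.
  induction 1 as [a b H | a | a b _ [->|IH] | a b c _ [->|IH1] _ [->|IH2]]; auto.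
  - right. now apply simD_linked.
  - right. now apply linked_sym.
  - right. eapply linked_trans; eauto.
Qed.
End PartialAction.

Arguments sim1 {S X} Xs th s x t y.
Arguments same_image {S X} Xs th s x t y.
Arguments linked {S X} Xs th a b.

Section Classes.
Context {S : InvSemigroupoid} {X : Type} {Xs : arr S -> X -> Prop} {th : arr S -> X -> X}.
Implicit Types (a b : arr S * X) (e : Eg Xs th).

Lemma approx_refl a : Dg Xs a -> approx Xs th a a.
Proof. intros Ha. repeat split; auto. apply rst_refl. Qed.

Lemma approx_sym a b : approx Xs th a b -> approx Xs th b a.
Proof. intros [Ha [Hb H]]. repeat split; auto. now apply rst_sym. Qed.

Lemma approx_trans a b c : approx Xs th a b -> approx Xs th b c -> approx Xs th a c.
Proof. intros [Ha [_ H1]] [_ [Hc H2]]. repeat split; auto. eapply rst_trans; eauto. Qed.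

Lemma class_Dg e a : proj1_sig e a -> Dg Xs a.
Proof. destruct e as [P [a0 [H0 ->]]]. now intros [_ [H _]]. Qed.

Lemma class_approx e a b : proj1_sig e a -> proj1_sig e b -> approx Xs th a b.
Proof.
  destruct e as [P [a0 [H0 ->]]]. simpl. intros. eapply approx_trans; [apply approx_sym|]; eauto.
Qed.

Lemma class_closed e a b : proj1_sig e a -> approx Xs th a b -> proj1_sig e b.
Proof. destruct e as [P [a0 [H0 ->]]]. simpl. apply approx_trans. Qed.

Lemma class_inhabited e : exists a, proj1_sig e a.
Proof. destruct e as [P [a0 [H0 ->]]]. exists a0. now apply approx_refl. Qed.

Lemma cls_mem a (H : Dg Xs a) : proj1_sig (cls Xs th a H) a.
Proof. now apply approx_refl. Qed.

Lemma class_eq e1 e2 a b : proj1_sig e1 a -> proj1_sig e2 b -> approx Xs th a b -> e1 = e2.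
Proof.
  intros H1 H2 H.
  assert (E : proj1_sig e1 = proj1_sig e2).
  { apply functional_extensionality; intro c. apply propositional_extensionality.
    split; intro Hc.
    - apply (class_closed e2 b); auto. eapply approx_trans; [apply approx_sym, H|].
      eapply class_approx; eauto.
    - apply (class_closed e1 a); auto. eapply approx_trans; [exact H|].
      eapply class_approx; eauto. }
  destruct e1 as [P1 p1], e2 as [P2 p2]. simpl in E. subst P2. f_equal. apply proof_irrelevance.
Qed.

Definition rep e : arr S * X := proj1_sig (constructive_indefinite_description _ (class_inhabited e)).

Lemma rep_class e : proj1_sig e (rep e).
Proof. exact (proj2_sig (constructive_indefinite_description _ (class_inhabited e))). Qed.

Lemma Dsg_star_Dg s p x : Dsg Xs (star s) (p, x) -> Dg Xs (mul s p, x).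
Proof.
  intros [_ [H1 H2]]. rewrite star_star_g in *. simpl.
  rewrite star_mul by solve_obj. reassoc_in H2. reassoc. exact H2.
Qed.

Lemma etag_class s e : Esg Xs th (star s) e -> exists p x, Dsg Xs (star s) (p, x) /\
  proj1_sig e (p, x) /\ proj1_sig (etag Xs th s e) (mul s p, x).
Proof.
  intros [p [x [He HD]]]. unfold etag. apply epsilon_spec.
  exists (cls Xs th (mul s p, x) (Dsg_star_Dg s p x HD)), p, x.
  split; [exact HD|]. split; [exact He | apply cls_mem].
Qed.

Lemma ig_class_star_mul (Hp : partial_action Xs th) s x :
  Dg Xs (s, x) -> proj1_sig (ig Xs th Hp x) (mul (star s) s, x).
Proof.
  intros Hsx. unfold ig.
  destruct (constructive_indefinite_description _ _) as [e0 [He0 [? HD0]]]; simpl.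
  assert (HD : Dg Xs (mul (star s) s, x)).
  { simpl. now rewrite (star_idem _ _ (idempotent_star_mul _ s)), (proj2 (idempotent_star_mul _ s)). }
  repeat split; auto. apply rst_step. repeat split; auto.
  right. repeat split; auto; apply idempotent_star_mul || apply He0.
Qed.

Lemma ig_Esg_star (Hp : partial_action Xs th) s x :
  Dg Xs (s, x) -> Esg Xs th (star s) (ig Xs th Hp x).
Proof.
  intros Hsx. exists (mul (star s) s), x. split; [now apply ig_class_star_mul|].
  split; [exact (class_Dg _ _ (ig_class_star_mul Hp s x Hsx))|].
  split; [solve_obj|]. rewrite (star_idem _ _ (idempotent_star_mul _ s)), star_star_g.
  reassoc. rewrite !star_mul_starw by solve_obj. exact Hsx.
Qed.

Lemma etag_ig (Hp : partial_action Xs th) s x e :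
  proj1_sig e (s, x) -> etag Xs th s (ig Xs th Hp x) = e.
Proof.
  intros He. assert (Hsx := class_Dg _ _ He).
  destruct (etag_class s _ (ig_Esg_star Hp s x Hsx)) as [p [x' [HD [Hpx' Heta]]]].
  apply (class_eq _ _ _ _ Heta He).
  destruct (class_approx _ _ _ Hpx' (ig_class_star_mul Hp s x Hsx)) as [_ [_ Happ]].
  destruct (approx_linked Hp _ _ Happ) as [Eq|Hl].
  - injection Eq as -> ->. rewrite mul_star_mul. now apply approx_refl.
  - pose proof (idempotent_star_mul _ s) as Hss. pose proof (Dsg_star_Dg s p x' HD) as HDsp.
    destruct HD as [_ [Hsp _]]. rewrite star_star_g in Hsp. simpl in Hsx.
    (* the common image of [(p, x')] and [(s^* s, x)] is [x] itself *)
    rewrite <- (star_idem _ _ Hss) in Hsx.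
    destruct (linked_same_image Hp _ _ _ _ Hl Hsx) as [Hx' [_ Hth]].
    rewrite (star_idem _ _ Hss) in Hsx. rewrite (th_idem Hp _ _ Hss Hsx) in Hth.
    assert (Hx : Xs (star (mul (star s) s)) (th p x')) by now rewrite Hth, (star_idem _ _ Hss).
    destruct (th_mul Hp (mul (star s) s) p x' ltac:(solve_obj) Hx' Hx) as [HA HB].
    rewrite Hth, (th_idem Hp _ _ Hss Hsx) in HB.
    rewrite star_mul, (star_idem _ _ Hss) in HA by solve_obj.
    repeat split; auto. apply rst_step. repeat split; auto. left.
    split; [solve_obj|]. rewrite star_mul by solve_obj.
    reassoc_in HA. reassoc_in HB. reassoc. auto.
Qed.

End Classes.

Section UniversalMap.
Context {S : InvSemigroupoid} {X F : Type}
  {Xs : arr S -> X -> Prop} {th : arr S -> X -> X}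
  {Fs : arr S -> F -> Prop} {ze : arr S -> F -> F}
  (Hp : partial_action Xs th) (HG : global_action Fs ze)
  (j : X -> F) (Hj : equivariant Xs th Fs ze j).

Lemma global_mul s t z : dm s = cd t -> Fs (star (mul s t)) z ->
  Fs (star t) z /\ Fs (star s) (ze t z) /\ ze (mul s t) z = ze s (ze t z).
Proof.
  intros H Hz. destruct (proj2 HG s t H z) as [[H1 _] H2]. destruct (H1 Hz). auto.
Qed.

Lemma global_dom_star s z : Fs (mul (star s) s) z -> Fs (star s) z.
Proof.
  intros Hz. assert (E : mul (star s) s = star (mul (star s) s))
    by now rewrite star_mul, star_star_g by solve_obj.
  rewrite E in Hz. now destruct (global_mul (star s) s z ltac:(solve_obj) Hz).
Qed.

Definition univ_val (a : arr S * X) : F := ze (fst a) (j (snd a)).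

Lemma univ_val_linked a b : Dg Xs b -> linked Xs th a b -> univ_val a = univ_val b.
Proof.
  destruct a as [s x], b as [t y]. unfold univ_val; simpl.
  intros Hy [[H1 [H2 H3]]|[H1 [H2 H3]]]; simpl in *.
  - (* [ze t] undoes [ze (t^* s)] on [j x], because [t t^*] acts trivially on its domain *)
    assert (Hx : Xs (star (mul (star t) s)) x) by (rewrite star_mul, star_star_g by solve_obj; auto).
    assert (Ey : j y = ze (mul (star t) s) (j x)) by (rewrite <- H3; apply Hj; auto).
    assert (Hjy : Fs (star t) (j y)) by (apply global_dom_star, Hj, Hy).
    destruct (proj2 HG t (mul (star t) s) ltac:(solve_obj) (j x)) as [[_ HJ] HC].
    rewrite <- Ey in HJ. specialize (HJ (conj (proj1 Hj _ _ Hx) Hjy)).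
    rewrite Ey, <- HC by exact HJ. rewrite <- mul_assoc in HJ |- * by solve_obj.
    destruct (global_mul (mul t (star t)) s (j x) ltac:(solve_obj) HJ) as [_ [HA ->]].
    rewrite (star_idem _ _ (idempotent_mul_star _ t)) in HA.
    now rewrite (th_idem (proj1 HG) _ _ (idempotent_mul_star _ t) HA).
  - rewrite <- !(proj2 Hj) by auto. congruence.
Qed.

Lemma univ_val_approx a b : approx Xs th a b -> univ_val a = univ_val b.
Proof.
  intros [_ [Hb H]]. destruct (approx_linked Hp a b H) as [->|Hl]; auto.
  now apply univ_val_linked.
Qed.

Definition univ_map (e : Eg Xs th) : F := univ_val (rep e).

Lemma univ_map_class e a : proj1_sig e a -> univ_map e = univ_val a.
Proof. intros H. apply univ_val_approx. eapply class_approx; [apply rep_class | exact H]. Qed.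

Lemma univ_map_dom s e : Esg Xs th s e -> Fs s (univ_map e).
Proof.
  intros [p [x [He [_ [H1 H2]]]]]. rewrite (univ_map_class _ _ He). unfold univ_val; simpl.
  apply (proj1 Hj) in H2. rewrite dm_star in H1.
  assert (H3 : Fs (mul (star (mul (star s) p)) (mul (star s) p)) (j x)).
  { rewrite star_mul, star_star_g by solve_obj. reassoc. reassoc_in H2. exact H2. }
  apply global_dom_star in H3.
  destruct (global_mul (star s) p (j x) ltac:(solve_obj) H3) as [_ [H4 _]].
  now rewrite star_star_g in H4.
Qed.

Lemma univ_map_etag s e : Esg Xs th (star s) e -> univ_map (etag Xs th s e) = ze s (univ_map e).
Proof.
  intros HE. destruct (etag_class s e HE) as [p [x [HD [He He']]]].
  rewrite (univ_map_class _ _ He), (univ_map_class _ _ He'). unfold univ_val; simpl.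
  pose proof (global_dom_star _ _ (proj1 Hj _ _ (Dsg_star_Dg s p x HD))) as Hsp.
  destruct HD as [_ [H1 _]]. rewrite star_star_g in H1.
  now destruct (global_mul s p (j x) ltac:(solve_obj) Hsp) as [_ [_ ->]].
Qed.

Lemma univ_map_mono (leX : X -> X -> Prop) (leF : F -> F -> Prop) :
  ordered_partial_action leF Fs ze -> (forall x y, leX x y -> leF (j x) (j y)) ->
  forall e1 e2, leEg Xs th leX e1 e2 -> leF (univ_map e1) (univ_map e2).
Proof.
  intros [_ [_ Hiso]] Hmono e1 e2 [r [y [x [H2 [Hle H1]]]]].
  rewrite (univ_map_class _ _ H1), (univ_map_class _ _ H2). unfold univ_val; simpl.
  apply Hiso; [| | now apply Hmono]; apply global_dom_star, (proj1 Hj).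
  - exact (class_Dg _ _ H1).
  - exact (class_Dg _ _ H2).
Qed.

Lemma univ_map_ig x : univ_map (ig Xs th Hp x) = j x.
Proof.
  unfold ig. destruct (constructive_indefinite_description _ _) as [e0 [He0 [Hx ?]]].
  erewrite univ_map_class by apply cls_mem. unfold univ_val; simpl.
  apply (th_idem (proj1 HG) _ _ He0), (proj1 Hj), Hx.
Qed.

Lemma equivariant_ig_class (k : Eg Xs th -> F) :
  equivariant (Esg Xs th) (etag Xs th) Fs ze k -> (forall x, k (ig Xs th Hp x) = j x) ->
  forall s x e, proj1_sig e (s, x) -> k e = ze s (j x).
Proof.
  intros Hk Hi s x e He.
  rewrite <- (etag_ig Hp s x e He), (proj2 Hk), Hi; [reflexivity|].
  exact (ig_Esg_star Hp s x (class_Dg _ _ He)).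
Qed.

End UniversalMap.

Arguments univ_map {S X F Xs th} ze j e.

Theorem mainTheorem7
  (S : InvSemigroupoid) (X : Type) (leX : X -> X -> Prop)
  (Xs : arr S -> X -> Prop) (th : arr S -> X -> X)
  (HX : is_poset leX) (Hth : ordered_partial_action leX Xs th)
  (F : Type) (leF : F -> F -> Prop)
  (Fs : arr S -> F -> Prop) (ze : arr S -> F -> F)
  (HF : is_poset leF) (Hze : ordered_global_action leF Fs ze)
  (j : X -> F) (Hj : ordered_equivariant leX Xs th leF Fs ze j) :
  (exists! k : Eg Xs th -> F,
      ordered_equivariant (leEg Xs th leX) (Esg Xs th) (etag Xs th) leF Fs ze k /\
      (forall x, k (ig Xs th (proj1 Hth) x) = j x)) /\
  (forall k : Eg Xs th -> F,
      ordered_equivariant (leEg Xs th leX) (Esg Xs th) (etag Xs th) leF Fs ze k ->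
      (forall x, k (ig Xs th (proj1 Hth) x) = j x) ->
      forall (s : arr S) (x : X) (e : Eg Xs th),
        proj1_sig e (s, x) -> k e = ze s (j x)).
Proof.
  destruct Hze as [Hord HG], Hj as [Hjeq Hjmono]. set (Hp := proj1 Hth).
  split.
  - exists (univ_map ze j). split; [split; [split; [split|]|]|].
    + exact (univ_map_dom Hp HG j Hjeq).
    + exact (univ_map_etag Hp HG j Hjeq).
    + exact (univ_map_mono Hp HG j Hjeq leX leF Hord Hjmono).
    + exact (univ_map_ig Hp HG j Hjeq).
    + intros k [[Hk _] Hi]. apply functional_extensionality. intros e.
      destruct (class_inhabited e) as [[s x] He].
      rewrite (univ_map_class Hp HG j Hjeq _ _ He).
      symmetry. exact (equivariant_ig_class Hp j k Hk Hi s x e He).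
  - intros k [Hk _]. exact (equivariant_ig_class Hp j k Hk).
Qed.
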